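(* Let $a,b$ be positive integers and $h(j)=aj+b$ for $j\ge0$, $h(j)=0$ for $j<0$. Then $$\operatorname{hdepth}(h)=\begin{cases}1,& a<b,\\ 2,& b\le a<2b,\\ 3,& 2b\le a<3b,\\ 4,& 3b\le a\le 4b,\\ 3,& a>4b.\end{cases}$$
   Context: For a nonzero function $h:\mathbb Z\to\mathbb Z_{\ge 0}$ with $h(j)=0$ for all sufficiently negative $j$, and integers $k\le d$, set $\beta_k^d(h)=\sum_{j\le k}(-1)^{k-j}\binom{d-j}{k-j}h(j)$, and $\operatorname{hdepth}(h)=\max\{d\in\mathbb Z:\ \beta_k^d(h)\ge 0\text{ for all integers }k\le d\}$. *)

From mathcomp Require Import all_boot all_order all_algebra.
Set Implicit Arguments. Unset Strict Implicit. Unset Printing Implicit Defensive.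
Import Order.TTheory GRing.Theory Num.Theory.
Local Open Scope ring_scope.

(* h : int -> int (values >= 0), vanishing below the integer L.
   beta L h k d = \sum_{L <= j <= k} (-1)^(k-j) * C(d-j, k-j) * h(j),
   which equals the paper's \sum_{j <= k} whenever h j = 0 for all j < L
   (and k <= d, so that d - j >= k - j >= 0 in the range). *)
Definition beta (L : int) (h : int -> int) (k d : int) : int :=
  if L <= k then
    \sum_(0 <= i < absz (k - L + 1))
      (let j := L + i%:Z in
       (-1) ^+ absz (k - j) * ('C(absz (d - j), absz (k - j)))%:Z * h j)
  else 0.

Definition beta_nonneg (L : int) (h : int -> int) (d : int) : Prop :=
  forall k : int, k <= d -> 0 <= beta L h k d.

Definition is_hdepth (L : int) (h : int -> int) (d : int) : Prop :=
  beta_nonneg L h d /\ forall d' : int, beta_nonneg L h d' -> d' <= d.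

Definition hlin (a b : nat) (j : int) : int :=
  if 0 <= j then a%:Z * j + b%:Z else 0.

(* Already beta_1 and beta_2 decide the upper bound: beta_1^d(h) = a - (d-1) b is
   negative once (d-1) b > a, and for d >= 5 the inequalities beta_1^d >= 0 and
   beta_2^d = C(d,2) b - (d-1)(a+b) + 2a + b >= 0 contradict each other (for d = 4 the
   second one reads 4b - a >= 0).  The lower bound is a finite computation of
   beta_k^d for k <= d <= 4. *)
From mathcomp Require Import all_boot all_order all_algebra zify.
Import Order.TTheory GRing.Theory Num.Theory.
Local Open Scope ring_scope.

Lemma beta0_nat (h : int -> int) (k : nat) (d : int) :
  beta 0 h k d =
  \sum_(0 <= i < k.+1) ((-1) ^+ (k - i) * ('C(absz (d - i%:Z), k - i))%:Z * h i).
Proof.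
rewrite /beta lez_nat subr0 (_ : k%:Z + 1 = k.+1%:Z); last by rewrite -addn1.
by apply: eq_big_nat => i /andP [_ lt_ik]; rewrite add0r subzn.
Qed.

Lemma beta_nonneg_nat (h : int -> int) (d : nat) :
  (forall k : nat, (k <= d)%N -> 0 <= beta 0 h k d) -> beta_nonneg 0 h d.
Proof. by move=> Hk [k|k] le_kd //; apply: Hk; rewrite -lez_nat. Qed.

Lemma beta_nonneg_le_of_beta12_lt0 (h : int -> int) (D : nat) : (1 <= D)%N ->
  (forall m : nat, (D < m)%N -> beta 0 h 1 m < 0 \/ beta 0 h 2 m < 0) ->
  forall d, beta_nonneg 0 h d -> d <= D.
Proof.
move=> D_gt0 Hneg d Hd; rewrite leNgt; apply/negP => lt_Dd.
case: d Hd lt_Dd => [m|m] Hd lt_Dm //; rewrite ltz_nat in lt_Dm.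
have [lt0 | lt0] := Hneg m lt_Dm; rewrite ltNge Hd // lez_nat in lt0; lia.
Qed.

Lemma is_hdepth_of_beta12_lt0 (h : int -> int) (D : nat) : (1 <= D)%N ->
  beta_nonneg 0 h D ->
  (forall m : nat, (D < m)%N -> beta 0 h 1 m < 0 \/ beta 0 h 2 m < 0) ->
  is_hdepth 0 h D.
Proof. by move=> D_gt0 HD Hneg; split=> //; apply: beta_nonneg_le_of_beta12_lt0. Qed.

Section LinearH.

Variables a b : nat.

Lemma beta1_hlin (m : nat) : beta 0 (hlin a b) 1 m = (a + b)%:Z - (m * b)%:Z.
Proof.
rewrite beta0_nat !big_nat_recr //= big_geq // add0r /hlin /=.
rewrite !subn0 subnn bin1 bin0 expr1 expr0; lia.
Qed.

Lemma beta2_hlin (m : nat) : (1 <= m)%N ->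
  beta 0 (hlin a b) 2 m =
  'C(m, 2)%:Z * b%:Z - (m%:Z - 1) * (a + b)%:Z + (2 * a%:Z + b%:Z).
Proof.
move=> m_gt0; rewrite beta0_nat !big_nat_recr //= big_geq // add0r /hlin /=.
rewrite !subn0 subnn bin0 (_ : (2 - 1 = 1)%N) // bin1 expr1 expr0 subzn //.
rewrite /= addn0 (_ : (1 + 1 = 2)%N) // sqrrN expr1n -(subzn m_gt0); lia.
Qed.

Lemma beta1_hlin_lt0 (D m : nat) : (a < D * b)%N -> (D < m)%N ->
  beta 0 (hlin a b) 1 m < 0.
Proof.
move=> lt_a_Db lt_Dm; rewrite beta1_hlin.
have := leq_mul lt_Dm (leqnn b); lia.
Qed.

Lemma binom2_double (m : nat) : 2 * 'C(m, 2)%:Z = m%:Z * (m%:Z - 1).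
Proof.
have -> : 2 * 'C(m, 2)%:Z = (2 * 'C(m, 2))%N%:Z by rewrite PoszM.
rewrite -[2%N]/(1.+1) mul_bin_left bin1; case: m => [|m] //=.
by rewrite PoszM subn1 /= mulrC -addn1 PoszD addrK.
Qed.

(* 2 beta_2^m + 2 (m - 3) beta_1^m = - ((m - 5) m + 2) b < 0 for m >= 5. *)
Lemma beta12_hlin_lt0 (m : nat) : (0 < b)%N -> (4 <= m)%N ->
  (m = 4%N -> (4 * b < a)%N) ->
  beta 0 (hlin a b) 1 m < 0 \/ beta 0 (hlin a b) 2 m < 0.
Proof.
move=> b_gt0 ge4_m Hm4; rewrite beta1_hlin beta2_hlin; last by lia.
have := binom2_double m; case: (ltnP 4 m) => Hm5 Hbin.
  case: (ltrP ((a + b)%:Z - (m * b)%:Z) 0) => B1; [by left | right].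
  have P1 : 0 <= (m%:Z - 3) * ((a + b)%:Z - (m * b)%:Z) by apply: mulr_ge0; lia.
  have P2 : 0 <= (m%:Z - 5) * (m * b)%:Z by apply: mulr_ge0; lia.
  nia.
have m4 : m = 4%N by lia.
move: Hbin (Hm4 m4); rewrite m4; right; lia.
Qed.

Lemma hlin_beta_nonneg (D : nat) : (1 <= D <= 4)%N ->
  ((D - 1) * b <= a)%N -> (D = 4%N -> (a <= 4 * b)%N) ->
  beta_nonneg 0 (hlin a b) D.
Proof.
move=> /andP [D_gt0 D_le4] le_a HD4; apply: beta_nonneg_nat => k.
case: D D_gt0 D_le4 le_a HD4 => [|[|[|[|[|D]]]]] // _ _ le_a HD4;
  case: k => [|[|[|[|[|k]]]]] // _;
  rewrite beta0_nat !big_nat_recr //= ?big_geq // ?add0r /hlin /binomial /=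
    ?subSS ?subn0 ?subnn; lia.
Qed.

End LinearH.

Theorem theorem3p5 (a b : nat) (ha : (0 < a)%N) (hb : (0 < b)%N) :
  is_hdepth 0 (hlin a b)
    (if (a < b)%N then 1
     else if (a < 2 * b)%N then 2
     else if (a < 3 * b)%N then 3
     else if (a <= 4 * b)%N then 4
     else 3).
Proof.
have small_depth (D : nat) : (1 <= D <= 3)%N -> ((D - 1) * b <= a < D * b)%N ->
    is_hdepth 0 (hlin a b) D.
  move=> /andP [D_gt0 D_le3] /andP [le_a lt_a]; apply: is_hdepth_of_beta12_lt0 => //.
    by apply: hlin_beta_nonneg => //; lia.
  by move=> m lt_Dm; left; apply: beta1_hlin_lt0 lt_a _.
case: (ltnP a b) => h1; first by apply: (small_depth 1%N); lia.
case: (ltnP a (2 * b)) => h2; first by apply: (small_depth 2%N); lia.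
case: (ltnP a (3 * b)) => h3; first by apply: (small_depth 3%N); lia.
case: (leqP a (4 * b)) => h4; apply: is_hdepth_of_beta12_lt0 => //.
- by apply: hlin_beta_nonneg.
- by move=> m lt_4m; apply: beta12_hlin_lt0 => //; lia.
- by apply: hlin_beta_nonneg => //; lia.
- by move=> m lt_3m; apply: beta12_hlin_lt0 => //; lia.
Qed.
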